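(* Let $\mathrm{Bool}_t$ assign to each finite set $X$ a subset $\mathrm{Bool}_t(X)\subseteq\mathrm{Bool}(X)$, stable under bijections ($f\circ\sigma^{-1}\in\mathrm{Bool}_t(X')$ for $f\in\mathrm{Bool}_t(X)$, $\sigma:X\to X'$ bijective), with $1\in\mathrm{Bool}_t(\emptyset)$, closed under $\star_1$ and under restrictions. Let $\mathcal{E}$ assign to each $f\in\mathrm{Bool}_t(X)$ a set $\mathcal{E}(f)$ of equivalence relations on $X$, compatible with bijections ($\mathcal{E}(f\circ\sigma^{-1})$ is the image of $\mathcal{E}(f)$ under transport by $\sigma$), such that $f/{\sim}\in\mathrm{Bool}_t(X/{\sim})$ for all $\sim\in\mathcal{E}(f)$. Assume: ($\star_1$) $\mathcal{E}(1)$ contains the equivalence on $\emptyset$, and $\mathcal{E}(f\star_1g)=\{\sim_X\sqcup\sim_Y\mid\sim_X\in\mathcal{E}(f),\ \sim_Y\in\mathcal{E}(g)\}$ for disjoint $X,Y$, $f\in\mathrm{Bool}_t(X)$, $g\in\mathrm{Bool}_t(Y)$; ($\delta$) for $f\in\mathrm{Bool}_t(X)$ and $\sim\subseteq\sim'$: ($\sim\in\mathcal{E}(f)$ and $\overline{\sim'}\in\mathcal{E}(f/{\sim})$) iff ($\sim'\in\mathcal{E}(f)$ and $\sim\in\mathcal{E}(f\mid\sim')$); ($\Delta$) for disjoint $X,Y$, $f\in\mathrm{Bool}_t(X\sqcup Y)$ and equivalences $\sim_X,\sim_Y$ on $X,Y$: $\sim_X\sqcup\sim_Y\in\mathcal{E}(f)$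 iff $\sim_X\in\mathcal{E}(f_{\mid X})$ and $\sim_Y\in\mathcal{E}(f_{\mid Y})$; ($\epsilon$) for $f\in\mathrm{Bool}_t(X)$: $=_X$ and $\sim_f^i$ belong to $\mathcal{E}(f)$; for $\sim\in\mathcal{E}(f)$, $f\mid\sim$ is modular iff $\sim$ is $=_X$; and $f/{\sim}$ is modular iff $\sim=\sim_f^i$. Then $\mathcal{E}(f)=\mathcal{E}^S(f)=\mathcal{E}^W(f)$ for every finite set $X$ and every $f\in\mathrm{Bool}_t(X)$.
   Context: A boolean function on a finite set $X$ is a map $f:\mathcal{P}(X)\to\mathbb{Z}$ with $f(\emptyset)=0$; $\mathrm{Bool}(X)$ is their set; $f_{\mid Y}$ is the restriction to $\mathcal{P}(Y)$. For disjoint $X,Y$, $(f\star_1g)(A)=f(A\cap X)+g(A\cap Y)$ (associative, commutative, unit $1\in\mathrm{Bool}(\emptyset)$). For nonempty $X$, $f$ is indecomposable if $f=f'\star_1f''$ with $f'\in\mathrm{Bool}(X\setminus Y)$, $f''\in\mathrm{Bool}(Y)$ forces $Y\in\{\emptyset,X\}$. Each $f$ determines a unique equivalence $\sim_f^i$ with $f=\prod^{\star_1}_{Y\in X/\sim_f^i}f_{\mid Y}$ and each $f_{\mid Y}$ indecomposable; $\mathrm{ic}(f)=|X/\sim_f^i|$. $f$ is modular if $f(A)=\sum_{x\in A}f(\{x\})$ for all $A$. For an equivalence $\sim$ on $X$: $\mathrm{cl}(\sim)=|X/{\sim}|$, $\varpi_\sim$ the canonical surjection, $f/{\sim}(A)=f(\varpi_\sim^{-1}(A))$,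 $(f\mid\sim)(A)=\sum_{Y\in X/\sim}f(A\cap Y)$. If $\sim\subseteq\sim'$, $\overline{\sim'}$ is the equivalence on $X/{\sim}$ with $\varpi_\sim(x)\,\overline{\sim'}\,\varpi_\sim(y)\iff x\sim'y$. $=_X$ is the equality relation. $\mathcal{E}^W(f)=\{\sim:\mathrm{ic}(f\mid\sim)=\mathrm{cl}(\sim)\}$ and $\mathcal{E}^S(f)=\{\sim\in\mathcal{E}^W(f):\mathrm{ic}(f/{\sim})=\mathrm{ic}(f)\}$. *)

(* Finite sets are modelled as finTypes; equivalence
   relations on X as partitions of [set: X] (their sets of classes). *)
From HB Require Import structures.
From mathcomp Require Import all_boot all_order all_algebra.
From Stdlib Require Import ClassicalEpsilon.
Set Implicit Arguments. Unset Strict Implicit. Unset Printing Implicit Defensive.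
Import GRing.Theory Num.Theory.
Local Open Scope ring_scope.

(* Bool(X): maps P(X) -> Z (the condition f(emptyset)=0 is is_bool). *)
Definition bfun (X : finType) := {ffun {set X} -> int}.
Definition is_bool (X : finType) (f : bfun X) : Prop := f set0 = 0.

Definition transp (X X' : finType) (s : X -> X') (f : bfun X) : bfun X' :=
  [ffun A : {set X'} => f (s @^-1: A)].
Definition tr_part (X X' : finType) (s : X -> X') (P : {set {set X}})
  : {set {set X'}} := [set s @: B | B : {set X} in P].

Definition unit1 : bfun void := [ffun _ => 0].

Definition star (X Y : finType) (f : bfun X) (g : bfun Y) : bfun (X + Y)%type :=
  [ffun A : {set (X + Y)%type} => f (@inl X Y @^-1: A) + g (@inr X Y @^-1: A)].
Definition part_sum (X Y : finType) (PX : {set {set X}}) (PY : {set {set Y}})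
  : {set {set (X + Y)%type}} :=
  [set (@inl X Y) @: B | B : {set X} in PX] :|: [set (@inr X Y) @: B | B : {set Y} in PY].
Definition restrl (X Y : finType) (f : bfun (X + Y)%type) : bfun X :=
  [ffun A : {set X} => f (@inl X Y @: A)].
Definition restrr (X Y : finType) (f : bfun (X + Y)%type) : bfun Y :=
  [ffun A : {set Y} => f (@inr X Y @: A)].

Definition subT (X : finType) (Y : {set X}) : finType := {x : X | x \in Y}.
Definition restr (X : finType) (Y : {set X}) (f : bfun X) : bfun (subT Y) :=
  [ffun A : {set subT Y} => f (val @: A)].

(* X / ~  (the set of classes), f / ~, f | ~, overline ~' *)
Definition quot (X : finType) (P : {set {set X}}) : finType :=
  {B : {set X} | B \in P}.
Definition fquot (X : finType) (f : bfun X) (P : {set {set X}})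
  : bfun (quot P) := [ffun S : {set quot P} => f (\bigcup_(b in S) val b)].
Definition fmid (X : finType) (f : bfun X) (P : {set {set X}}) : bfun X :=
  [ffun A : {set X} => \sum_(B in P) f (A :&: B)].
Definition qpart (X : finType) (P P' : {set {set X}}) : {set {set quot P}} :=
  [set [set b : quot P | val b \subset B'] | B' : {set X} in P'].

Definition refines (X : finType) (P P' : {set {set X}}) : Prop :=
  forall B, B \in P -> exists2 B', B' \in P' & B \subset B'.

Definition eqpart (X : finType) : {set {set X}} := [set [set x] | x : X].

Definition modular (X : finType) (f : bfun X) : Prop :=
  forall A, f A = \sum_(x in A) f [set x].

Definition indecomposable (Y : finType) (g : bfun Y) : Prop :=
  (0 < #|Y|)%N /\
  forall Z : {set Y},
    (exists (g1 : bfun (subT (~: Z))) (g2 : bfun (subT Z)),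
        is_bool g1 /\ is_bool g2 /\
        forall A, g A = g1 (val @^-1: A) + g2 (val @^-1: A)) ->
    Z = set0 \/ Z = [set: Y].

Definition is_icpart (X : finType) (f : bfun X) (P : {set {set X}}) : Prop :=
  partition P [set: X] /\
  (forall A, f A = \sum_(B in P) restr B f [set y : subT B | val y \in A]) /\
  (forall B, B \in P -> indecomposable (restr B f)).

Definition icpart (X : finType) (f : bfun X) : {set {set X}} :=
  epsilon (inhabits set0) (is_icpart f).
Definition ic (X : finType) (f : bfun X) : nat := #|icpart f|.

Definition EW (X : finType) (f : bfun X) (P : {set {set X}}) : Prop :=
  partition P [set: X] /\ ic (fmid f P) = #|P|.
Definition ES (X : finType) (f : bfun X) (P : {set {set X}}) : Prop :=
  EW f P /\ ic (fquot f P) = ic f.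

(* Both E(f) and E^W(f) are the set of partitions of X all of whose blocks are
   indecomposable for f.  For E^W this is the combinatorics of the finest
   splitting of f | ~.  For E, transporting f along X = (X \ B) + B for a block B
   and applying (Delta) treats the blocks one at a time, and (epsilon) shows that
   the one-block partition of B lies in E(f_|B) exactly when f_|B is
   indecomposable.  Finally E(f) is inside E^S(f): for ~ in E(f), merging the
   classes of ~ along ~^i_{f/~} gives by (delta) an element L of E(f) with f/L
   modular, hence L = ~^i_f by (epsilon) and ic(f/~) = |L| = ic(f). *)

From HB Require Import structures.
From mathcomp Require Import all_boot all_order all_algebra.
From Stdlib Require Import ClassicalEpsilon.
Set Implicit Arguments. Unset Strict Implicit. Unset Printing Implicit Defensive.
Import GRing.Theory.
Local Open Scope ring_scope.

Section SubsetRestriction.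
Variables (X : finType) (C : {set X}).
Implicit Types (A : {set subT C}) (V W : {set X}).

Lemma imset_val_preimset W : val @: (val @^-1: W : {set subT C}) = W :&: C.
Proof.
apply/setP=> x; rewrite inE; apply/imsetP/andP=> [[y + ->]|[xW xC]].
  by rewrite inE => yW; split=> //; apply: valP.
by exists (exist _ x xC); rewrite ?inE.
Qed.

Lemma preimset_val_imset A : val @^-1: (val @: A) = A.
Proof. by apply/setP=> y; rewrite inE (mem_imset _ _ val_inj). Qed.

Lemma imset_val_subset A : val @: A \subset C.
Proof. by apply/subsetP=> _ /imsetP[y _ ->]; apply: valP. Qed.

Lemma preimset_val_setI V : (val @^-1: (V :&: C) : {set subT C}) = val @^-1: V.
Proof. by apply/setP=> y; rewrite !inE (valP y) andbT. Qed.

Lemma imset_val_setT : val @: [set: subT C] = C.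
Proof. by rewrite -(preimsetT val) imset_val_preimset setTI. Qed.

Lemma restrE (f : bfun X) A : restr C f A = f (val @: A).
Proof. by rewrite ffunE. Qed.

Lemma restr_preimset (f : bfun X) W : restr C f (val @^-1: W) = f (W :&: C).
Proof. by rewrite restrE imset_val_preimset. Qed.

Lemma restr_bool (f : bfun X) : is_bool f -> is_bool (restr C f).
Proof. by rewrite /is_bool restrE imset0. Qed.

End SubsetRestriction.

Lemma partitionTP (T : finType) (P : {set {set T}}) :
  partition P [set: T] <->
  [/\ set0 \notin P, forall x, exists2 B, B \in P & x \in B &
      forall B1 B2 x, B1 \in P -> B2 \in P -> x \in B1 -> x \in B2 -> B1 = B2].
Proof.
split=> [partP | [P0 covP uniqP]].
  have tiP := partition_trivIset partP.
  split; first by rewrite (partition0 partP).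
    move=> x; have : x \in cover P by rewrite (cover_partition partP).
    by case/bigcupP=> B PB xB; exists B.
  by move=> B1 B2 x P1 P2 x1 x2; rewrite -(def_pblock tiP P1 x1) (def_pblock tiP P2 x2).
apply/and3P; split=> //.
  apply/eqP/setP=> x; rewrite inE; have [B PB xB] := covP x.
  by apply/bigcupP; exists B.
apply/trivIsetP=> B1 B2 P1 P2; apply: contraNT => /pred0Pn[x /andP[x1 x2]].
by rewrite (uniqP _ _ _ P1 P2 x1 x2).
Qed.

Lemma partition_setT1 (T : finType) :
  [set: T] != set0 -> partition [set [set: T]] [set: T].
Proof.
move=> T0; apply/partitionTP; split; first by rewrite inE eq_sym.
  by move=> x; exists [set: T]; rewrite ?inE.
by move=> B1 B2 x /set1P -> /set1P ->.
Qed.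

Section Refinement.
Variables (T : finType) (R P : {set {set T}}).
Hypotheses (partR : partition R [set: T]) (partP : partition P [set: T]).
Hypothesis RP : refines R P.

Let enclosing (C : {set T}) := if [pick x in C] is Some x then pblock P x else set0.

Lemma refines_block C B x : C \in R -> B \in P -> x \in C -> x \in B -> C \subset B.
Proof.
move=> RC PB xC xB; have [B' PB' CB'] := RP RC.
have [_ _ uniqP] := (partitionTP P).1 partP.
by rewrite -(uniqP _ _ x PB' PB) // (subsetP CB').
Qed.

Lemma enclosingE C B x : C \in R -> B \in P -> x \in C -> x \in B -> enclosing C = B.
Proof.
move=> RC PB xC xB; rewrite /enclosing; case: pickP => [y yC | /(_ x)]; last by rewrite xC.
exact/(def_pblock (partition_trivIset partP) PB)/(subsetP (refines_block RC PB xC xB)).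
Qed.

Lemma imset_enclosing : enclosing @: R = P.
Proof.
have [_ covR _] := (partitionTP R).1 partR; have [_ covP _] := (partitionTP P).1 partP.
apply/setP=> B; apply/imsetP/idP=> [[C RC ->] | PB].
  have /set0Pn[x xC] := partition_neq0 partR RC.
  by have [B0 PB0 xB0] := covP x; rewrite (enclosingE RC PB0 xC xB0).
have /set0Pn[x xB] := partition_neq0 partP PB.
by have [C RC xC] := covR x; exists C => //; rewrite (enclosingE RC PB xC xB).
Qed.

Lemma refines_card_leq : (#|P| <= #|R|)%N.
Proof. by rewrite -imset_enclosing leq_imset_card. Qed.

(* [enclosing] maps R onto P; equal cardinalities make it injective, so no
   block of P contains two blocks of R. *)
Lemma refines_card_eq : #|R| = #|P| -> R = P.
Proof.
move=> cardRP; have [_ covR _] := (partitionTP R).1 partR.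
have /imset_injP enclosing_inj : #|enclosing @: R| == #|R| by rewrite imset_enclosing cardRP.
suff PR : P \subset R by apply/eqP; rewrite eq_sym eqEcard PR cardRP leqnn.
apply/subsetP=> B PB; have /set0Pn[x xB] := partition_neq0 partP PB.
have [C RC xC] := covR x; have CB := refines_block RC PB xC xB.
suff -> : B = C by [].
apply/eqP; rewrite eqEsubset CB andbT; apply/subsetP=> y yB.
have [C' RC' yC'] := covR y.
have -> : C = C'.
  by apply: enclosing_inj; rewrite // (enclosingE RC PB xC xB) (enclosingE RC' PB yC' yB).
exact: yC'.
Qed.

End Refinement.

Lemma refines_antisym (T : finType) (R P : {set {set T}}) :
  partition R [set: T] -> partition P [set: T] -> refines R P -> refines P R -> R = P.
Proof.
move=> partR partP RP PR; apply: refines_card_eq => //.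
by apply/eqP; rewrite eqn_leq !refines_card_leq.
Qed.

(* Indecomposability of f restricted to D, stated on X itself rather than on
   the subtype D (see [indecomposable_restr]). *)
Definition indecomposable_set (X : finType) (f : bfun X) (D : {set X}) : Prop :=
  D != set0 /\ forall Z : {set X}, Z \subset D ->
    (forall A : {set X}, A \subset D -> f A = f (A :&: Z) + f (A :\: Z)) ->
    Z = set0 \/ Z = D.

Definition indecomposable_partition (X : finType) (f : bfun X) (P : {set {set X}}) :=
  partition P [set: X] /\ forall B, B \in P -> indecomposable_set f B.

Lemma eq_indecomposable_set (X : finType) (f g : bfun X) (D : {set X}) :
  (forall A : {set X}, A \subset D -> f A = g A) ->
  indecomposable_set f D -> indecomposable_set g D.
Proof.
move=> fg [D0 indf]; split=> // Z ZD splitg; apply: indf => // A AD.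
rewrite !fg //; [exact: splitg | exact: subset_trans (subsetDl _ _) AD |].
exact: subset_trans (subsetIl _ _) AD.
Qed.

Lemma indecomposable_set_restr (X : finType) (C : {set X}) (f : bfun X)
    (D : {set subT C}) :
  indecomposable_set (restr C f) D <-> indecomposable_set f (val @: D).
Proof.
have valI (A B : {set subT C}) : val @: (A :&: B) = val @: A :&: val @: B.
  by apply: imsetI => x y _ _; apply: val_inj.
have valD (A B : {set subT C}) : val @: (A :\: B) = val @: A :\: val @: B.
  apply/setP=> x; apply/imsetP/setDP=> [[y /setDP[yA yB] ->] | [/imsetP[y yA ->] yB]].
    by rewrite !(mem_imset _ _ val_inj).
  by exists y; rewrite // inE yA andbT; apply: contra yB; apply: imset_f.
have valK (W : {set X}) : W \subset val @: D -> val @: (val @^-1: W : {set subT C}) = W.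
  by move=> WD; rewrite imset_val_preimset; apply/setIidPl/(subset_trans WD)/imset_val_subset.
have valS (W : {set X}) : W \subset val @: D -> (val @^-1: W : {set subT C}) \subset D.
  by move=> WD; rewrite -(preimset_val_imset D) preimsetS.
rewrite /indecomposable_set imset_eq0; split=> -[D0 indD]; split=> // Z ZD split.
- case: (indD _ (valS _ ZD)) => [A AD | Z0 | ZD'].
  + by rewrite !restrE valD valI (valK _ ZD); apply/split/imsetS.
  + by left; rewrite -(valK _ ZD) Z0 imset0.
  + by right; rewrite -(valK _ ZD) ZD'.
- case: (indD _ (imsetS _ ZD)) => [A AD | Z0 | ZD'].
  + by have := split _ (valS _ AD); rewrite !restrE valD valI (valK _ AD).
  + by left; apply: (imset_inj val_inj); rewrite Z0 imset0.
  + by right; apply: (imset_inj val_inj).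
Qed.

Lemma indecomposableE (Y : finType) (g : bfun Y) :
  is_bool g -> indecomposable g <-> indecomposable_set g [set: Y].
Proof.
move=> g0; rewrite /indecomposable -cardsT card_gt0.
split=> -[Y0 indg]; split=> // Z.
  move=> _ split; apply: indg; exists (restr (~: Z) g), (restr Z g).
  split; first exact: restr_bool; split; first exact: restr_bool.
  by move=> A; rewrite !restr_preimset (split A (subsetT _)) addrC setDE.
case=> [g1 [g2 [g10 [g20 split]]]]; apply: indg => // A _.
have AZ0 : A :&: Z :&: ~: Z = set0 by rewrite -setIA setICr setI0.
have ADZ0 : (A :\: Z) :&: Z = set0 by rewrite setDE -setIA [~: Z :&: Z]setIC setICr setI0.
rewrite !split -(preimset_val_setI (~: Z) (A :&: Z)) -(preimset_val_setI Z (A :\: Z)).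
rewrite AZ0 ADZ0 preimset_val_setI setDE preimset_val_setI !preimset0 g10 g20.
by rewrite add0r addr0 addrC.
Qed.

Lemma indecomposable_restr (X : finType) (C : {set X}) (f : bfun X) :
  is_bool f -> indecomposable (restr C f) <-> indecomposable_set f C.
Proof.
move=> f0; rewrite (indecomposableE (restr_bool C f0)).
by rewrite indecomposable_set_restr imset_val_setT.
Qed.

Lemma partition_subsetC (T : finType) (P : {set {set T}}) (B C : {set T}) :
  partition P [set: T] -> B \in P -> C \in P :\ B -> C \subset ~: B.
Proof.
move=> /partition_trivIset/trivIsetP tiP PB /setD1P[CnB PC].
by rewrite -disjoints_subset tiP.
Qed.

Section SplitBlock.
Variables (T : finType) (P : {set {set T}}) (B Z : {set T}).
Hypotheses (partP : partition P [set: T]) (PB : B \in P) (ZB : Z \subset B).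
Hypotheses (Z0 : Z != set0) (BZ0 : B :\: Z != set0).

Definition split_block := Z |: ((B :\: Z) |: (P :\ B)).

Lemma partition_split_block : partition split_block [set: T].
Proof.
have partPB : partition (P :\ B) (~: B) by rewrite -setTD; apply: partitionD1.
have disjB : [disjoint B :\: Z & ~: B] by rewrite disjoints_subset setCK subsetDl.
have disjZ : [disjoint Z & (B :\: Z) :|: ~: B].
  by rewrite disjoints_subset; apply/subsetP=> x xZ; rewrite !inE xZ (subsetP ZB x xZ).
suff <- : Z :|: ((B :\: Z) :|: ~: B) = [set: T].
  exact: partitionU1 (partitionU1 partPB BZ0 disjB) Z0 disjZ.
by apply/setP=> x; rewrite !inE; case: (x \in Z); case: (x \in B).
Qed.

Let notin_rest (S : {set T}) : S \subset B -> S != set0 -> S \notin P :\ B.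
Proof.
move=> SB; apply: contra => /(partition_subsetC partP PB) SCB.
by rewrite -subset0 -(setICr B) subsetI SB.
Qed.

Let ZnBZ : Z != B :\: Z.
Proof. by case/set0Pn: Z0 => x xZ; apply/eqP=> /setP/(_ x); rewrite !inE xZ. Qed.

Lemma card_split_block : #|split_block| = #|P|.+1.
Proof.
rewrite /split_block !cardsU1 in_setU1 negb_or ZnBZ !notin_rest ?subsetDl //.
by rewrite (cardsD1 B P) PB.
Qed.

Lemma fmid_split_block (f : bfun T) :
  fmid f P = f -> (forall A : {set T}, A \subset B -> f A = f (A :&: Z) + f (A :\: Z)) ->
  fmid f split_block = f.
Proof.
move=> fP splitB; apply/ffunP=> A; rewrite -{2}fP !ffunE.
rewrite !big_setU1 ?in_setU1 ?negb_or ?ZnBZ ?notin_rest ?subsetDl //=.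
by rewrite (big_setD1 B PB) (splitB _ (subsetIr A B)) -setIA (setIidPr ZB) addrA setIDA.
Qed.

End SplitBlock.

Section Splittings.
Variables (X : finType) (f : bfun X).
Hypothesis f0 : is_bool f.
Implicit Types (P : {set {set X}}) (A B : {set X}).

Lemma fmid_subset P B A :
  partition P [set: X] -> B \in P -> A \subset B -> fmid f P A = f A.
Proof.
move=> partP PB AB; rewrite ffunE (big_setD1 B PB) (setIidPl AB) big1 /= ?addr0 // => C PC.
suff -> : A :&: C = set0 by [].
apply/disjoint_setI0/(disjointWl AB); rewrite disjoints_subset subsetC.
exact: partition_subsetC partP PB PC.
Qed.
Lemma fmidK P : partition P [set: X] -> fmid (fmid f P) P = fmid f P.
Proof.
move=> partP; apply/ffunP=> A; rewrite [RHS]ffunE ffunE; apply: eq_bigr => B PB.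
by rewrite (fmid_subset partP PB) ?subsetIr.
Qed.

Lemma indecomposable_set_fmid P B :
  partition P [set: X] -> B \in P ->
  indecomposable_set (fmid f P) B <-> indecomposable_set f B.
Proof.
move=> partP PB.
by split; apply: eq_indecomposable_set => A AB; rewrite (fmid_subset partP PB).
Qed.

Lemma fmid_block_split P B A :
  partition P [set: X] -> fmid f P = f -> B \in P -> f A = f (A :&: B) + f (A :\: B).
Proof.
move=> partP fP PB; rewrite -{1 3}fP !ffunE !(big_setD1 B PB) /=.
rewrite [A :\: B]setDE -setIA [~: B :&: B]setIC setICr setI0 f0 add0r.
congr (_ + _); apply: eq_bigr => C PC.
by rewrite -setIA (setIidPr (partition_subsetC partP PB PC)).
Qed.

Lemma indecomposable_sub_block P C :
  partition P [set: X] -> fmid f P = f -> indecomposable_set f C ->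
  exists2 B, B \in P & C \subset B.
Proof.
move=> partP fP [/set0Pn[x xC] indC]; have [_ covP _] := (partitionTP P).1 partP.
have [B PB xB] := covP x; exists B => //.
have [A AC | CB0 | <-] := indC (C :&: B) (subsetIl C B); last exact: subsetIr.
  rewrite (fmid_block_split A partP fP PB) setIA (setIidPl AC) setDIr.
  by move: AC; rewrite -setD_eq0 => /eqP ->; rewrite set0U.
by move/setP: CB0 => /(_ x); rewrite !inE xC xB.
Qed.

(* A splitting partition of maximal size has indecomposable blocks, since a
   proper splitting of one block would give a larger one. *)
Lemma exists_indecomposable_splitting :
  exists P, [/\ partition P [set: X], fmid f P = f &
                forall B, B \in P -> indecomposable_set f B].
Proof.
pose good P := partition P [set: X] && (fmid f P == f).
have [P0 good0] : exists P, good P.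
  have [X0 | X0] := eqVneq [set: X] set0.
    exists set0; rewrite /good X0 partition_set0 eqxx; apply/eqP/ffunP=> A.
    have /eqP -> : A == set0 by rewrite -subset0 -X0 subsetT.
    by rewrite ffunE big_set0 f0.
  exists [set [set: X]]; rewrite /good partition_setT1 //; apply/eqP/ffunP=> A.
  by rewrite ffunE big_set1 setIT.
have [P goodP maxP] := arg_maxnP (fun P => #|P|) good0.
have /andP[partP /eqP fP] := goodP.
exists P; split=> // B PB; split=> [|Z ZB splitB]; first exact: partition_neq0 partP PB.
have [-> | Z0] := eqVneq Z set0; first by left.
have [BZ0 | BZ0] := eqVneq (B :\: Z) set0.
  by right; apply/eqP; rewrite eqEsubset ZB -setD_eq0 BZ0 eqxx.
have good' : good (split_block P B Z).
  by apply/andP; split; [exact: partition_split_block | apply/eqP; exact: fmid_split_block].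
by have := maxP _ good'; rewrite card_split_block //= ltnn.
Qed.

Lemma is_icpartE P :
  is_icpart f P <->
  [/\ partition P [set: X], fmid f P = f & forall B, B \in P -> indecomposable_set f B].
Proof.
have restrI A B : restr B f [set y : subT B | val y \in A] = f (A :&: B).
  by rewrite -restr_preimset; congr (restr B f _); apply/setP=> y; rewrite !inE.
have fmidE : fmid f P = f <-> forall A, f A = \sum_(B in P) restr B f [set y | val y \in A].
  split=> [fP A | fP]; last by apply/ffunP=> A; rewrite ffunE fP; apply: eq_bigr.
  by rewrite -{1}fP ffunE; apply: eq_bigr.
split=> [[partP [/fmidE fP indP]] | [partP /fmidE fP indP]].
  by split=> // B PB; apply/(indecomposable_restr B f0)/indP.
by do 2!split=> //; move=> B PB; apply/(indecomposable_restr B f0)/indP.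
Qed.

Lemma icpart_spec :
  [/\ partition (icpart f) [set: X], fmid f (icpart f) = f &
      forall B, B \in icpart f -> indecomposable_set f B].
Proof.
apply/is_icpartE; rewrite /icpart; apply: epsilon_spec.
by have [P ?] := exists_indecomposable_splitting; exists P; apply/is_icpartE.
Qed.

End Splittings.

Lemma fmid_bool (X : finType) (f : bfun X) (P : {set {set X}}) :
  is_bool f -> is_bool (fmid f P).
Proof. by move=> f0; rewrite /is_bool ffunE big1 // => B _; rewrite set0I f0. Qed.

Lemma EW_indecomposable_partition (X : finType) (f : bfun X) (P : {set {set X}}) :
  is_bool f -> EW f P <-> indecomposable_partition f P.
Proof.
move=> f0; rewrite /EW /indecomposable_partition /ic.
have [partR gR indR] := icpart_spec (fmid_bool P f0).
have RP : partition P [set: X] -> refines (icpart (fmid f P)) P.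
  move=> partP C RC.
  exact: (indecomposable_sub_block (fmid_bool P f0) partP (fmidK f0 partP) (indR C RC)).
split=> -[partP] => [cardR | indP]; split=> //.
  move=> B PB; rewrite -(indecomposable_set_fmid f0 partP PB).
  by apply: indR; rewrite (refines_card_eq partR partP (RP partP) cardR).
rewrite (refines_antisym partR partP (RP partP)) // => B PB.
apply: (indecomposable_sub_block (fmid_bool P f0) partR gR).
by rewrite (indecomposable_set_fmid f0 partP PB); apply: indP.
Qed.

Lemma tr_partK (X X' : finType) (s : X -> X') (s' : X' -> X) :
  cancel s s' -> cancel (tr_part s) (tr_part s').
Proof.
move=> sK P; rewrite /tr_part -imset_comp -[RHS]imset_id; apply: eq_imset => C /=.
by rewrite -imset_comp -[RHS]imset_id; apply: eq_imset => x /=.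
Qed.

Section SplitAtBlock.
Variables (X : finType) (B : {set X}).

Definition split_at (x : X) : subT (~: B) + subT B :=
  match Bool.bool_dec (x \in B) true with
  | left xB => inr (exist _ x xB)
  | right xNB => inl (exist _ x (etrans (in_setC x B) (introN idP xNB)))
  end.

Definition unsplit (u : subT (~: B) + subT B) : X :=
  match u with inl y => val y | inr y => val y end.

Lemma split_atK : cancel split_at unsplit.
Proof. by move=> x; rewrite /split_at; case: Bool.bool_dec. Qed.

Lemma unsplitK : cancel unsplit split_at.
Proof.
case=> y; rewrite /split_at /=; case: Bool.bool_dec => yB.
- by have := valP y; rewrite inE yB.
- by congr inl; apply: val_inj.
- by congr inr; apply: val_inj.
- by case: yB; apply: valP.
Qed.

Lemma split_at_bij : bijective split_at.
Proof. exact: Bijective split_atK unsplitK. Qed.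

Lemma restrl_split_at (f : bfun X) : restrl (transp split_at f) = restr (~: B) f.
Proof.
apply/ffunP=> A; rewrite !ffunE -(can2_imset_pre _ unsplitK split_atK) -imset_comp.
by congr (f _); apply: eq_imset.
Qed.

Lemma restrr_split_at (f : bfun X) : restrr (transp split_at f) = restr B f.
Proof.
apply/ffunP=> A; rewrite !ffunE -(can2_imset_pre _ unsplitK split_atK) -imset_comp.
by congr (f _); apply: eq_imset.
Qed.

Lemma imset_split_at_block : split_at @: B = inr @: [set: subT B].
Proof.
rewrite (can2_imset_pre _ split_atK unsplitK); apply/setP=> -[y|y]; rewrite !inE /=.
  apply/idP/imsetP=> [yB | [] //]; by have := valP y; rewrite inE yB.
by rewrite (mem_imset _ _ inr_inj) inE; apply: valP.
Qed.

Lemma imset_split_at_rest (C : {set X}) :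
  C \subset ~: B -> split_at @: C = inl @: (val @^-1: C : {set subT (~: B)}).
Proof.
move=> CB; rewrite (can2_imset_pre _ split_atK unsplitK).
apply/setP=> -[y|y]; rewrite !inE /=; first by rewrite (mem_imset _ _ (@inl_inj _ _)) inE.
apply/idP/imsetP=> [yC | [] //]; by have := subsetP CB _ yC; rewrite inE (valP y).
Qed.

Definition rest_part (P : {set {set X}}) : {set {set subT (~: B)}} :=
  [set val @^-1: C | C : {set X} in P :\ B].

Variable P : {set {set X}}.
Hypotheses (partP : partition P [set: X]) (PB : B \in P).

Lemma imset_val_rest_part : [set val @: D | D : {set subT (~: B)} in rest_part P] = P :\ B.
Proof.
rewrite -imset_comp -[RHS]imset_id; apply: eq_in_imset => C PC /=.
by rewrite imset_val_preimset; apply/setIidPl/(partition_subsetC partP PB).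
Qed.

Lemma partition_rest_part : partition (rest_part P) [set: subT (~: B)].
Proof.
rewrite -(imset_partition _ _ val_inj) imset_val_rest_part imset_val_setT -setTD.
exact: partitionD1.
Qed.

Lemma card_rest_part : #|rest_part P| = #|P :\ B|.
Proof.
by rewrite -[LHS](card_imset _ (imset_inj val_inj)) imset_val_rest_part.
Qed.

Lemma tr_part_split_at : tr_part split_at P = part_sum (rest_part P) [set [set: subT B]].
Proof.
rewrite /tr_part /part_sum /rest_part -{1}(setD1K PB) imsetU1 imset_set1 setUC.
rewrite imset_split_at_block -imset_comp; congr (_ :|: _).
apply: eq_in_imset => C PC /=.
exact/imset_split_at_rest/(partition_subsetC partP PB).
Qed.

End SplitAtBlock.

Lemma modular_transp (X X' : finType) (s : X -> X') (g : bfun X) :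
  bijective s -> modular g -> modular (transp s g).
Proof.
case=> s' sK s'K modg A; rewrite ffunE modg (reindex s'); last by exists s => y _.
apply: eq_big => [y | y _]; first by rewrite inE s'K.
by rewrite ffunE -(can2_imset_pre _ s'K sK) imset_set1.
Qed.

Section Coarsening.
Variables (X : finType) (P : {set {set X}}) (R : {set {set quot P}}).
Hypotheses (partP : partition P [set: X]) (partR : partition R [set: quot P]).

Definition union_blocks (K : {set quot P}) : {set X} := cover (val @: K).

Definition coarsen : {set {set X}} := [set union_blocks K | K : {set quot P} in R].

Lemma partition_coarsen : partition coarsen [set: X] /\ {in R &, injective union_blocks}.
Proof.
have partVR : partition [set val @: K | K : {set quot P} in R] P.
  by rewrite -[in X in partition _ X](imset_val_setT P) imset_partition //; apply: val_inj.
have [partL injL] := partition_partition partP partVR.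
split; first by rewrite /coarsen /union_blocks imset_comp.
move=> K1 K2 RK1 RK2 /injL eqK; apply: (imset_inj val_inj); apply: eqK; exact: imset_f.
Qed.

Lemma mem_union_blocks (x : X) (K : {set quot P}) :
  reflect (exists2 b, b \in K & x \in val b) (x \in union_blocks K).
Proof.
apply: (iffP bigcupP) => [[_ /imsetP[b bK ->] xb] | [b bK xb]]; first by exists b.
by exists (val b); rewrite ?imset_f.
Qed.

Lemma refines_coarsen : refines P coarsen.
Proof.
move=> B PB; have [_ covR _] := (partitionTP R).1 partR.
have [K RK bK] := covR (exist _ B PB); exists (union_blocks K); first exact: imset_f.
by apply/subsetP=> x xB; apply/mem_union_blocks; exists (exist _ B PB).
Qed.

Lemma qpart_coarsen : qpart P coarsen = R.
Proof.
have [_ _ uniqP] := (partitionTP P).1 partP.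
rewrite /qpart /coarsen -imset_comp -[RHS]imset_id; apply: eq_in_imset => K RK /=.
apply/setP=> b; rewrite inE; apply/idP/idP=> [bK | bK]; last first.
  by apply/subsetP=> x xb; apply/mem_union_blocks; exists b.
have /set0Pn[x xb] := partition_neq0 partP (valP b).
have /mem_union_blocks[b' b'K xb'] := subsetP bK x xb.
suff -> : b = b' by [].
by apply: val_inj; apply: (uniqP _ _ x (valP b) (valP b') xb xb').
Qed.

Lemma card_coarsen : #|coarsen| = #|R|.
Proof. by apply: card_in_imset; case: partition_coarsen. Qed.

Definition coarse_block (k : quot R) : quot coarsen :=
  exist _ (union_blocks (val k)) (imset_f union_blocks (valP k)).

Lemma coarse_block_bij : bijective coarse_block.
Proof.
apply: inj_card_bij; last by rewrite !card_sig card_coarsen.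
move=> k1 k2 /(congr1 val) /= eqk; apply: val_inj.
by case: partition_coarsen => _; apply; rewrite ?(valP k1) ?(valP k2).
Qed.

Lemma fquot_coarsen (f : bfun X) :
  fquot f coarsen = transp coarse_block (fquot (fquot f P) R).
Proof.
have [cb' cbK cb'K] := coarse_block_bij.
apply/ffunP=> S; rewrite !ffunE; congr (f _); apply/setP=> x.
apply/bigcupP/bigcupP=> [[c cS xc] | [b /bigcupP[k kS bk] xb]].
  rewrite -[c]cb'K in cS xc.
  have /mem_union_blocks[b bk xb] : x \in union_blocks (val (cb' c)) := xc.
  by exists b => //; apply/bigcupP; exists (cb' c); rewrite ?inE.
have xk : x \in union_blocks (val k) by apply/mem_union_blocks; exists b.
by exists (coarse_block k); rewrite // inE in kS.
Qed.

End Coarsening.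

Arguments coarsen {X} P R.

Lemma modular_subsingleton (T : finType) (g : bfun T) :
  is_bool g -> (forall x y : T, x = y) -> modular g.
Proof.
move=> g0 allT A; have [-> | [x xA]] := set_0Vmem A; first by rewrite big_set0.
suff -> : A = [set x] by rewrite big_set1.
by apply/setP=> y; rewrite inE (allT y x) xA eqxx.
Qed.

Section AdmissibleSystem.
Local Unset Implicit Arguments.
Variable Bt : forall X : finType, bfun X -> Prop.
Variable E : forall X : finType, bfun X -> {set {set X}} -> Prop.
Local Set Implicit Arguments.
Hypothesis HBbool : forall (X : finType) (f : bfun X), Bt X f -> is_bool f.
Hypothesis HBbij : forall (X X' : finType) (s : X -> X') (f : bfun X),
  bijective s -> Bt X f -> Bt X' (transp s f).
Hypothesis HBres : forall (X : finType) (Y : {set X}) (f : bfun X),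
  Bt X f -> Bt (subT Y) (restr Y f).
Hypothesis HEpart : forall (X : finType) (f : bfun X) (P : {set {set X}}),
  Bt X f -> E X f P -> partition P [set: X].
Hypothesis HEbij : forall (X X' : finType) (s : X -> X') (f : bfun X),
  bijective s -> Bt X f ->
  forall P' : {set {set X'}},
    E X' (transp s f) P' <-> exists2 P, E X f P & P' = tr_part s P.
Hypothesis HEquot : forall (X : finType) (f : bfun X) (P : {set {set X}}),
  Bt X f -> E X f P -> Bt (quot P) (fquot f P).
Hypothesis Hdelta : forall (X : finType) (f : bfun X) (P P' : {set {set X}}),
  Bt X f -> partition P [set: X] -> partition P' [set: X] -> refines P P' ->
  (E X f P /\ E (quot P) (fquot f P) (qpart P P')) <-> (E X f P' /\ E X (fmid f P') P).
Hypothesis HDelta : forall (X Y : finType) (f : bfun (X + Y)%type)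
  (PX : {set {set X}}) (PY : {set {set Y}}),
  Bt (X + Y)%type f -> partition PX [set: X] -> partition PY [set: Y] ->
  (E (X + Y)%type f (part_sum PX PY) <-> E X (restrl f) PX /\ E Y (restrr f) PY).
Hypothesis Heps1 : forall (X : finType) (f : bfun X),
  Bt X f -> E X f (eqpart X) /\ E X f (icpart f).
Hypothesis Heps2 : forall (X : finType) (f : bfun X) (P : {set {set X}}),
  Bt X f -> E X f P ->
  (modular (fmid f P) <-> P = eqpart X) /\ (modular (fquot f P) <-> P = icpart f).

Lemma E_setT_indecomposable (Y : finType) (h : bfun Y) :
  Bt Y h -> E Y h [set [set: Y]] <-> indecomposable_set h [set: Y].
Proof.
move=> Bh; have h0 := HBbool Bh; have [partR hR indR] := icpart_spec h0.
split=> [Eh | indh].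
  apply: indR; rewrite -(Heps2 Bh Eh).2.1 ?set11 //.
  apply: modular_subsingleton; first by rewrite /is_bool ffunE big_set0.
  by move=> a b; apply: val_inj; move: (valP a) (valP b); rewrite !inE => /eqP -> /eqP ->.
have [B RB TB] := indecomposable_sub_block h0 partR hR indh.
suff <- : icpart h = [set [set: Y]] by case: (Heps1 Bh).
apply: refines_antisym => // [|C RC|C /set1P ->]; first exact: partition_setT1 indh.1.
  by exists [set: Y]; rewrite ?set11 ?subsetT.
by exists B.
Qed.

Lemma E_block (X : finType) (f : bfun X) (P : {set {set X}}) (B : {set X}) :
  Bt X f -> partition P [set: X] -> B \in P ->
  E X f P <->
  E _ (restr (~: B) f) (rest_part B P) /\ E _ (restr B f) [set [set: subT B]].
Proof.
move=> Bf partP PB; have sbij := split_at_bij B.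
have /set0Pn[x xB] := partition_neq0 partP PB.
have subB0 : [set: subT B] != set0 by apply/set0Pn; exists (exist _ x xB).
have := HDelta (HBbij sbij Bf) (partition_rest_part partP PB) (partition_setT1 subB0).
rewrite -tr_part_split_at // restrl_split_at restrr_split_at; apply: iff_trans.
split=> [EP | /(HEbij sbij Bf)[P' EP' trP]]; first by apply/(HEbij sbij Bf); exists P.
by rewrite -(tr_partK (split_atK B) P) trP (tr_partK (split_atK B)).
Qed.

Lemma E_indecomposable_partition (X : finType) (f : bfun X) (P : {set {set X}}) :
  Bt X f -> E X f P -> indecomposable_partition f P.
Proof.
move=> Bf EfP; have partP := HEpart Bf EfP; split=> // B PB.
have [_ EB] := (E_block Bf partP PB).1 EfP.
have := (E_setT_indecomposable (HBres B Bf)).1 EB.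
by rewrite indecomposable_set_restr imset_val_setT.
Qed.

Lemma indecomposable_partition_E (X : finType) (f : bfun X) (P : {set {set X}}) :
  Bt X f -> indecomposable_partition f P -> E X f P.
Proof.
move: {2}#|P| (erefl #|P|) => n; elim: n X f P => [|n IHn] X f P cardP Bf [partP indP].
  have P0 : P = set0 by apply: cards0_eq.
  suff -> : P = eqpart X by case: (Heps1 Bf).
  have [_ covP _] := (partitionTP P).1 partP.
  apply/setP=> C; rewrite P0 inE; apply/esym/imsetP=> -[x _ _].
  by have [B] := covP x; rewrite P0 inE.
have /set0Pn[B PB] : P != set0 by rewrite -card_gt0 cardP.
apply/(E_block Bf partP PB); split.
  apply: IHn (HBres _ Bf) _.
    by rewrite card_rest_part //; move: cardP; rewrite (cardsD1 B P) PB => -[].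
  split=> [|D restD]; first exact: partition_rest_part.
  apply/indecomposable_set_restr/indP.
  have : val @: D \in P :\ B by rewrite -(imset_val_rest_part partP PB) imset_f.
  by case/setD1P.
apply/(E_setT_indecomposable (HBres B Bf)).
by rewrite indecomposable_set_restr imset_val_setT; apply: indP.
Qed.

Lemma E_ic (X : finType) (f : bfun X) (P : {set {set X}}) :
  Bt X f -> E X f P -> ic (fquot f P) = ic f.
Proof.
move=> Bf EfP; have partP := HEpart Bf EfP; have Bq := HEquot Bf EfP.
set R := icpart (fquot f P); have ER : E _ (fquot f P) R := (Heps1 Bq).2.
have partR := HEpart Bq ER; have [partL _] := partition_coarsen partP partR.
have [EL _] : E X f (coarsen P R) /\ E X (fmid f (coarsen P R)) P.
  apply: (Hdelta Bf partP partL (refines_coarsen partR)).1.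
  by rewrite qpart_coarsen.
have modL : modular (fquot f (coarsen P R)).
  rewrite fquot_coarsen //; apply: modular_transp (coarse_block_bij partP partR) _.
  exact/(Heps2 Bq ER).2.
by rewrite /ic -((Heps2 Bf EL).2.1 modL) card_coarsen.
Qed.

Lemma E_ES_EW (X : finType) (f : bfun X) (P : {set {set X}}) :
  Bt X f -> (E X f P <-> ES f P) /\ (ES f P <-> EW f P).
Proof.
move=> Bf; have EW_E : EW f P <-> E X f P.
  rewrite (EW_indecomposable_partition _ (HBbool Bf)).
  by split; [exact: indecomposable_partition_E | exact: E_indecomposable_partition].
have ES_EW : ES f P <-> EW f P.
  by split=> [[] // | WP]; split=> //; exact: E_ic Bf (EW_E.1 WP).
by split=> //; apply: iff_trans (iff_sym EW_E) (iff_sym ES_EW).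
Qed.

End AdmissibleSystem.

Local Close Scope ring_scope.

Theorem proposition3p19
  (Bt : forall X : finType, bfun X -> Prop)
  (E : forall X : finType, bfun X -> {set {set X}} -> Prop)
  (* Bool_t(X) is a subset of Bool(X) *)
  (HBbool : forall (X : finType) (f : bfun X), Bt X f -> is_bool f)
  (HBbij : forall (X X' : finType) (s : X -> X') (f : bfun X),
      bijective s -> Bt X f -> Bt X' (transp s f))
  (HB1 : Bt void unit1)
  (HBstar : forall (X Y : finType) (f : bfun X) (g : bfun Y),
      Bt X f -> Bt Y g -> Bt (X + Y)%type (star f g))
  (HBres : forall (X : finType) (Y : {set X}) (f : bfun X),
      Bt X f -> Bt (subT Y) (restr Y f))
  (* E(f) is a set of equivalence relations on X *)
  (HEpart : forall (X : finType) (f : bfun X) (P : {set {set X}}),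
      Bt X f -> E X f P -> partition P [set: X])
  (HEbij : forall (X X' : finType) (s : X -> X') (f : bfun X),
      bijective s -> Bt X f ->
      forall P' : {set {set X'}},
        E X' (transp s f) P' <-> exists2 P, E X f P & P' = tr_part s P)
  (HEquot : forall (X : finType) (f : bfun X) (P : {set {set X}}),
      Bt X f -> E X f P -> Bt (quot P) (fquot f P))
  (* (star_1) *)
  (Hstar1 : E void unit1 set0)
  (Hstar2 : forall (X Y : finType) (f : bfun X) (g : bfun Y),
      Bt X f -> Bt Y g ->
      forall P : {set {set (X + Y)%type}},
        E (X + Y)%type (star f g) P <->
        exists PX PY, [/\ E X f PX, E Y g PY & P = part_sum PX PY])
  (* (delta) *)
  (Hdelta : forall (X : finType) (f : bfun X) (P P' : {set {set X}}),
      Bt X f -> partition P [set: X] -> partition P' [set: X] ->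
      refines P P' ->
      (E X f P /\ E (quot P) (fquot f P) (qpart P P')) <->
      (E X f P' /\ E X (fmid f P') P))
  (* (Delta) *)
  (HDelta : forall (X Y : finType) (f : bfun (X + Y)%type)
      (PX : {set {set X}}) (PY : {set {set Y}}),
      Bt (X + Y)%type f -> partition PX [set: X] -> partition PY [set: Y] ->
      (E (X + Y)%type f (part_sum PX PY) <->
       E X (restrl f) PX /\ E Y (restrr f) PY))
  (* (epsilon) *)
  (Heps1 : forall (X : finType) (f : bfun X),
      Bt X f -> E X f (eqpart X) /\ E X f (icpart f))
  (Heps2 : forall (X : finType) (f : bfun X) (P : {set {set X}}),
      Bt X f -> E X f P ->
      (modular (fmid f P) <-> P = eqpart X) /\
      (modular (fquot f P) <-> P = icpart f)) :
  forall (X : finType) (f : bfun X), Bt X f ->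
    forall P : {set {set X}}, (E X f P <-> ES f P) /\ (ES f P <-> EW f P).
Proof.
move=> X f Bf P.
exact: (E_ES_EW HBbool HBbij HBres HEpart HEbij HEquot Hdelta HDelta Heps1 Heps2).
Qed.
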